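(* In the setting of the context: (i) all diagonal elements of $\mathbf{A}(0)$ and of $\breve{\mathbf{A}}(-1)$ are positive; (ii) for every $k\in\mathbb{Z}_+$, $\sum_{l=k}^\infty\mathbf{A}(l)>\mathbf{O}$ and $\sum_{l=k-1}^\infty\breve{\mathbf{A}}(l)>\mathbf{O}$ (elementwise strictly positive).
   Context: BMAP: $M\in\mathbb{N}$, $\mathbb{M}=\{1,\dots,M\}$; $\mathbf{C}$ an $M\times M$ matrix with negative diagonal and nonnegative off-diagonal entries, $\mathbf{D}(k)$ ($k\in\mathbb{N}$) nonnegative $M\times M$ matrices with $(\mathbf{C}+\sum_k\mathbf{D}(k))\mathbf{e}=\mathbf{0}$ ($\mathbf{e}$ column of ones, $\mathbf{I}$ identity); $\mathbf{D}=\sum_k\mathbf{D}(k)$; the BMAP $\{(N(t),J(t))\}$ on $\mathbb{Z}_+\times\mathbb{M}$, $N(0)=0$: $J$ jumps $i\to j\neq i$ without arrivals at rate $[\mathbf{C}]_{ij}$, and $k$ arrivals with a transition $i\to j$ occur at rate $[\mathbf{D}(k)]_{ij}$. $\mathbf{C}+\mathbf{D}$ is irreducible with stationary vector $\boldsymbol{\pi}$ and $\lambda=\boldsymbol{\pi}\sum_kk\mathbf{D}(k)\mathbf{e}>0$. $H$ is a distribution function on $[0,\infty)$ with mean $h\in(0,\infty)$, $T\sim H$ independent of the BMAP, and $\rho=\lambda h<1$. $[\mathbf{A}(k)]_{ij}=\mathbb{P}(N(T)=k,J(T)=j\mid J(0)=i)$, $k\in\mathbb{Z}_+$. Fix $\mu\in(0,\infty)$,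 let $\theta=\max_{i\in\mathbb{M}}|[\mathbf{C}]_{ii}|$, and define $\breve{\mathbf{A}}(-1)=\frac{\mu}{\mu+\theta}\mathbf{A}(0)$, $\breve{\mathbf{A}}(0)=\frac{\theta}{\mu+\theta}\mathbf{I}+\frac{\mu}{\mu+\theta}\mathbf{A}(1)$, $\breve{\mathbf{A}}(k)=\frac{\mu}{\mu+\theta}\mathbf{A}(k+1)$ for $k\in\mathbb{N}$. *)

From HB Require Import structures.
From mathcomp Require Import all_boot all_order all_algebra.
From mathcomp Require Import all_classical all_reals all_analysis.
Set Implicit Arguments. Unset Strict Implicit. Unset Printing Implicit Defensive.
Import Order.TTheory GRing.Theory Num.Theory numFieldNormedType.Exports.
Local Open Scope classical_set_scope.
Local Open Scope ring_scope.

Section BMAP.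
Variables (R : realType) (M : nat).

Definition theta (C : 'M[R]_M) : R := \big[Num.max/0]_(i < M) `|C i i|.

Definition mxseries (F : nat -> 'M[R]_M) : 'M[R]_M :=
  \matrix_(i, j) limn (fun n => \sum_(0 <= l < n) F l i j).

(* D = sum_{k>=1} D(k) ; the value D 0 is never used (k ranges over N = {1,2,..}) *)
Definition Dsum (D : nat -> 'M[R]_M) : 'M[R]_M :=
  mxseries (fun l => if l is l'.+1 then D l'.+1 else 0).

Definition irreducible_gen (Q : 'M[R]_M) : Prop :=
  forall i j : 'I_M, connect [rel a b | (a != b) && (0 < Q a b)] i j.

(* Uniformization kernel of the BMAP (with rate theta):
   K(0) = I + C/theta, K(k) = D(k)/theta (k >= 1). *)
Definition Kstep (C : 'M[R]_M) (D : nat -> 'M[R]_M) (k : nat) : 'M[R]_M :=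
  if k is k'.+1 then (theta C)^-1 *: D k'.+1 else 1%:M + (theta C)^-1 *: C.

Fixpoint Kpow (C : 'M[R]_M) (D : nat -> 'M[R]_M) (n k : nat) : 'M[R]_M :=
  if n is n'.+1 then \sum_(l < k.+1) Kpow C D n' l *m Kstep C D (k - l)
  else (if k == 0%N then 1%:M else 0).

(* [Ptrans C D k t]_{ij} = P(N(t) = k, J(t) = j | J(0) = i), given by the
   uniformization representation of the BMAP (N(0) = 0). *)
Definition Ptrans (C : 'M[R]_M) (D : nat -> 'M[R]_M) (k : nat) (t : R) : 'M[R]_M :=
  mxseries (fun n => (expR (- (theta C * t)) * (theta C * t) ^+ n / n`!%:R)
                       *: Kpow C D n k).

(* [Amx C D H k]_{ij} = P(N(T) = k, J(T) = j | J(0) = i) with T ~ H independent *)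
Definition Amx (C : 'M[R]_M) (D : nat -> 'M[R]_M) (H : probability R R) (k : nat)
  : 'M[R]_M :=
  \matrix_(i, j) fine (\int[H]_(t in `[0%R, +oo[) (Ptrans C D k t i j)%:E)%E.

Definition Abreve (C : 'M[R]_M) (D : nat -> 'M[R]_M) (H : probability R R)
  (mu : R) (l : int) : 'M[R]_M :=
  match l with
  | Posz 0 => (theta C / (mu + theta C)) *: 1%:M + (mu / (mu + theta C)) *: Amx C D H 1
  | Posz k => (mu / (mu + theta C)) *: Amx C D H k.+1
  | Negz 0 => (mu / (mu + theta C)) *: Amx C D H 0
  | Negz _ => 0
  end.

End BMAP.

(* The uniformized kernel K(0) = I + C/theta, K(k) = D(k)/theta is nonnegative and
   substochastic, so every Poisson-weighted term of the uniformization series of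
   P(k, t) is a nonnegative lower bound for P(k, t) <= 1, strictly positive for t > 0
   as soon as the corresponding convolution power K^(n)(k) is.  A law with positive
   mean charges ]0, +oo[, hence [A(k)]_ij > 0 whenever j is reachable from i with
   exactly k arrivals in the uniformized chain.  Every state reaches itself with no
   arrival, giving (i); for (ii), since lambda > 0 some D(m) has a positive entry,
   and irreducibility of C + D lets the chain return through that entry as often as
   needed, so j is reachable from i with arbitrarily many arrivals. *)
From HB Require Import structures.
From mathcomp Require Import all_boot all_order all_algebra.
From mathcomp Require Import all_classical all_reals all_analysis.
From mathcomp Require Import lra.
Set Implicit Arguments. Unset Strict Implicit. Unset Printing Implicit Defensive.
Import Order.TTheory GRing.Theory Num.Theory numFieldNormedType.Exports.
Local Open Scope classical_set_scope.
Local Open Scope ring_scope.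

Import measurable_realfun.

Lemma sum_triangle (V : zmodType) (f : nat -> nat -> V) N :
  \sum_(0 <= k < N) \sum_(0 <= l < k.+1) f l (k - l)%N =
  \sum_(0 <= l < N) \sum_(0 <= m < N - l) f l m.
Proof.
elim: N => [|N IH]; first by rewrite !big_geq.
rewrite big_nat_recr //= IH [in RHS]big_nat_recr //= subSnn big_nat1.
rewrite [X in _ = X + _](@eq_big_nat _ _ _ 0 N _
  (fun l => \sum_(0 <= m < N - l) f l m + f l (N - l)%N)); last first.
  by move=> l /andP[_ lN]; rewrite subSn ?(ltnW lN) // big_nat_recr.
by rewrite big_split /= -addrA big_nat_recr //= subnn.
Qed.

Lemma expR_ge_partial_sum (R : realType) (x : R) n : 0 <= x ->
  \sum_(0 <= l < n) x ^+ l / l`!%:R <= expR x.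
Proof.
move=> x0.
have nd : nondecreasing_seq (series (exp_coeff x)).
  apply/nondecreasing_seqP => m; rewrite /series /= big_nat_recr //= lerDl.
  by apply: divr_ge0 => //; exact: exprn_ge0.
exact: nondecreasing_cvgn_le nd (is_cvg_series_exp_coeff x) n.
Qed.

Lemma nneseries_gt0 (R : realType) (u : nat -> R) k L : (k <= L)%N ->
  (forall l, 0 <= u l) -> 0 < u L -> (0 < \sum_(k <= l <oo) (u l)%:E)%E.
Proof.
move=> kL u0 uL.
have := @nneseries_lim_ge R (fun l => (u l)%:E) xpredT k L.+1 (fun l _ _ => u0 l).
apply: lt_le_trans; rewrite big_nat_recr //= (@lt_le_trans _ _ (u L)%:E) ?lte_fin //.
by apply: leeDr; apply: sume_ge0 => l _; rewrite lee_fin.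
Qed.

Section PositiveMean.
Variables (R : realType) (mu : {measure set R -> \bar R}).

Lemma measure_pos_halfline_neq0 (h : R) :
  (\int[mu]_x x%:E = h%:E)%E -> 0 < h -> mu `]0%R, +oo[%classic != 0%E.
Proof.
move=> hmean h0; apply/eqP => mu_pos.
have pos0 : (\int[mu]_x ((fun x : R => x%:E)^\+ x) = 0)%E.
  rewrite (ae_eq_integral (cst 0%E)) //; first exact: integral0.
  - by apply: measurable_funepos; apply/measurable_EFinP.
  - exists `]0%R, +oo[%classic; split => // x /= nx.
    rewrite in_itv /= andbT ltNge; apply/negP => x0; apply: nx => _.
    by rewrite funeposE /= max_r // lee_fin.
move: hmean; rewrite integralE pos0 add0e => hE.
have : (0 <= \int[mu]_x ((fun x : R => x%:E)^\- x))%E.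
  by apply: integral_ge0 => x _; exact: funeneg_ge0.
by rewrite -[X in (0 <= X)%E]oppeK hE oppe_ge0 lee_fin leNgt h0.
Qed.

Lemma integral_halfline_gt0 (g : R -> R) :
  mu `]0%R, +oo[%classic != 0%E ->
  measurable_fun (`[0%R, +oo[ : set R) g ->
  (forall t, 0 <= t -> 0 <= g t) -> (forall t, 0 < t -> 0 < g t) ->
  (0 < \int[mu]_(t in `[0%R, +oo[) (g t)%:E)%E.
Proof.
move=> mu_pos mg g0 gp.
rewrite lt_neqAle integral_ge0 ?andbT; last first.
  by move=> t; rewrite /= in_itv /= andbT => t0; rewrite lee_fin g0.
apply/negP => /eqP /esym int0.
have : (\int[mu]_(t in `[0%R, +oo[) `|(g t)%:E| = 0)%E.
  rewrite -int0; apply: eq_integral => t; rewrite inE /= in_itv /= andbT => t0.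
  by rewrite ger0_norm // g0.
move/ae_eq_integral_abs => /(_ (measurable_itv _)) /(_ ((measurable_EFinP _ _).2 mg)).
move=> [N [mN N0 sN]]; move/eqP: mu_pos; apply.
apply: (subset_measure0 (B := N)) => // t /=; rewrite in_itv /= andbT => t0.
apply: sN => /= /(_ _); rewrite /= in_itv /= ltW // => /(_ erefl) [] /eqP.
by rewrite (gt_eqF (gp _ t0)).
Qed.

End PositiveMean.

Section Uniformization.
Variables (R : realType) (M : nat) (C : 'M[R]_M) (D : nat -> 'M[R]_M).
Hypothesis M_gt0 : (0 < M)%N.
Hypothesis C_diag_lt0 : forall i : 'I_M, C i i < 0.
Hypothesis C_offdiag_ge0 : forall i j : 'I_M, i != j -> 0 <= C i j.
Hypothesis D_ge0 : forall (k : nat) (i j : 'I_M), 0 <= D k.+1 i j.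
Hypothesis generator_rowsum : forall i : 'I_M,
  (fun n : nat => \sum_(1 <= k < n) \sum_(j < M) D k i j) @ \oo --> - \sum_(j < M) C i j.

Lemma theta_ge_norm_diag i : `|C i i| <= theta C.
Proof. by rewrite /theta (le_bigmax _ (fun i => `|C i i|) i). Qed.

Lemma theta_gt0 : 0 < theta C.
Proof.
apply: lt_le_trans (theta_ge_norm_diag (Ordinal M_gt0)).
by rewrite normr_gt0 lt_eqF.
Qed.

Let theta_inv_gt0 : 0 < (theta C)^-1. Proof. by rewrite invr_gt0 theta_gt0. Qed.

Lemma Kstep0E i j : Kstep C D 0 i j = (i == j)%:R + (theta C)^-1 * C i j.
Proof. by rewrite /Kstep !mxE. Qed.

Lemma KstepSE m i j : Kstep C D m.+1 i j = (theta C)^-1 * D m.+1 i j.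
Proof. by rewrite /Kstep !mxE. Qed.

Lemma Kstep_ge0 m i j : 0 <= Kstep C D m i j.
Proof.
case: m => [|m]; last by rewrite KstepSE mulr_ge0 // ltW.
rewrite Kstep0E; case: eqP => [<-|/eqP ij]; last first.
  by rewrite add0r; apply: mulr_ge0; [exact: ltW | exact: C_offdiag_ge0].
have := theta_ge_norm_diag i; rewrite ltr0_norm ?C_diag_lt0 // => Cii.
rewrite -(mulVf (lt0r_neq0 theta_gt0)) -mulrDr; apply: mulr_ge0; [exact: ltW | lra].
Qed.

Lemma D_rowsum_le i n : \sum_(1 <= k < n) \sum_(j < M) D k i j <= - \sum_(j < M) C i j.
Proof.
have nd : nondecreasing_seq (fun n : nat => \sum_(1 <= k < n) \sum_(j < M) D k i j).
  apply/nondecreasing_seqP => -[|m]; first by rewrite !big_geq.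
  by rewrite (big_nat_recr m.+1) //= lerDl sumr_ge0.
rewrite -(cvg_lim _ (@generator_rowsum i)) //.
by apply: nondecreasing_cvgn_le => //; apply/cvg_ex; eexists; exact: generator_rowsum.
Qed.

Lemma Kstep_rowsum_le1 N i : \sum_(0 <= m < N) \sum_j Kstep C D m i j <= 1.
Proof.
case: N => [|N]; first by rewrite big_geq.
rewrite big_ltn // (eq_bigr _ (fun j _ => Kstep0E i j)) big_split /=.
rewrite (bigD1 i) //= eqxx big1 => [|j ji]; last by rewrite eq_sym (negbTE ji).
rewrite addr0 -mulr_sumr (@eq_big_nat _ _ _ 1 N.+1 _
  (fun m => (theta C)^-1 * \sum_j D m i j)); last first.
  by move=> [|m] // _; rewrite mulr_sumr; apply: eq_bigr => j _; exact: KstepSE.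
rewrite -mulr_sumr mulr1n.
have := D_rowsum_le i N.+1.
set a := \sum_(1 <= k < N.+1) _; set b := \sum_(j < M) C i j => ab.
have : (theta C)^-1 * a <= (theta C)^-1 * - b by rewrite ler_pM2l.
lra.
Qed.

Lemma KpowSE n k i j : Kpow C D n.+1 k i j =
  \sum_(0 <= l < k.+1) \sum_a Kpow C D n l i a * Kstep C D (k - l) a j.
Proof. by rewrite /= summxE big_mkord; apply: eq_bigr => l _; rewrite mxE. Qed.

Lemma Kpow_ge0 n k i j : 0 <= Kpow C D n k i j.
Proof.
elim: n k i j => [|n IH] k i j; first by rewrite /=; case: (k == 0%N); rewrite !mxE ?ler0n.
rewrite KpowSE; apply: sumr_ge0 => l _; apply: sumr_ge0 => a _.
exact: mulr_ge0 (IH _ _ _) (Kstep_ge0 _ _ _).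
Qed.

Lemma Kpow_rowsum_le1 n N i : \sum_(0 <= k < N) \sum_j Kpow C D n k i j <= 1.
Proof.
elim: n N i => [|n IH] N i.
  case: N => [|N]; first by rewrite big_geq.
  rewrite big_ltn //= [X in _ + X]big_nat_cond [X in _ + X]big1; last first.
    by move=> [|k] // _; apply: big1 => j _; rewrite mxE.
  rewrite addr0 (bigD1 i) //= !mxE eqxx big1 ?addr0 // => j ji.
  by rewrite mxE eq_sym (negbTE ji).
pose F l m := \sum_a Kpow C D n l i a * \sum_j Kstep C D m a j.
have rowE k : \sum_j Kpow C D n.+1 k i j = \sum_(0 <= l < k.+1) F l (k - l)%N.
  rewrite (eq_bigr _ (fun j _ => KpowSE n k i j)) exchange_big.
  apply: eq_bigr => l _; rewrite exchange_big; apply: eq_bigr => a _.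
  by rewrite mulr_sumr.
rewrite (eq_bigr _ (fun k _ => rowE k)) sum_triangle.
apply: le_trans (IH N i); apply: ler_sum => l _.
rewrite /F exchange_big; apply: ler_sum => a _ /=; rewrite -mulr_sumr.
by rewrite -[leRHS]mulr1 ler_wpM2l ?Kpow_ge0 ?Kstep_rowsum_le1.
Qed.

Lemma Kpow_le1 n k i j : Kpow C D n k i j <= 1.
Proof.
apply: le_trans (Kpow_rowsum_le1 n k.+1 i).
have sum_ge0 k' : 0 <= \sum_j' Kpow C D n k' i j' by apply: sumr_ge0 => *; exact: Kpow_ge0.
rewrite big_nat_recr //= -[leLHS]add0r lerD ?sumr_ge0 //.
by rewrite (bigD1 j) //= lerDl sumr_ge0 // => *; exact: Kpow_ge0.
Qed.

Definition Ptrans_term k i j (t : R) n :=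
  expR (- (theta C * t)) * (theta C * t) ^+ n / n`!%:R * Kpow C D n k i j.

Lemma PtransE k t i j :
  Ptrans C D k t i j = limn (fun N => \sum_(0 <= n < N) Ptrans_term k i j t n).
Proof.
rewrite /Ptrans /mxseries mxE; congr (lim (_ @ \oo)); apply/funext => N.
by apply: eq_bigr => n _; rewrite mxE.
Qed.

Lemma Ptrans_term_ge0 k i j t n : 0 <= t -> 0 <= Ptrans_term k i j t n.
Proof.
move=> t0; rewrite /Ptrans_term mulr_ge0 ?Kpow_ge0 // divr_ge0 //.
by rewrite mulr_ge0 ?expR_ge0 // exprn_ge0 // mulr_ge0 // ltW // theta_gt0.
Qed.

Lemma Ptrans_term_gt0 k i j t n : 0 < t -> 0 < Kpow C D n k i j ->
  0 < Ptrans_term k i j t n.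
Proof.
move=> t0 Kpos; rewrite /Ptrans_term mulr_gt0 // divr_gt0 ?ltr0n ?fact_gt0 //.
by rewrite mulr_gt0 ?expR_gt0 // exprn_gt0 // mulr_gt0 // theta_gt0.
Qed.

Lemma Ptrans_psum_le1 k i j t N : 0 <= t ->
  \sum_(0 <= n < N) Ptrans_term k i j t n <= 1.
Proof.
move=> t0; set x := theta C * t.
have x0 : 0 <= x by rewrite mulr_ge0 // ltW // theta_gt0.
(* bounding each K^(n) entry by 1 leaves the Poisson weights, which sum to at most 1 *)
apply: (@le_trans _ _ (\sum_(0 <= n < N) expR (- x) * (x ^+ n / n`!%:R))).
  apply: ler_sum => n _; rewrite /Ptrans_term -/x mulrA -[leRHS]mulr1.
  by rewrite ler_wpM2l ?Kpow_le1 // divr_ge0 // mulr_ge0 ?expR_ge0 ?exprn_ge0.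
rewrite -mulr_sumr (le_trans (ler_wpM2l (expR_ge0 _) (@expR_ge_partial_sum _ x N x0))) //.
by rewrite expRN mulVf // gt_eqF // expR_gt0.
Qed.

Lemma Ptrans_psum_nondecreasing k i j t : 0 <= t ->
  nondecreasing_seq (fun N => \sum_(0 <= n < N) Ptrans_term k i j t n).
Proof.
move=> t0; apply/nondecreasing_seqP => N.
by rewrite big_nat_recr //= lerDl Ptrans_term_ge0.
Qed.

Lemma Ptrans_psum_cvg k i j t : 0 <= t ->
  cvgn (fun N => \sum_(0 <= n < N) Ptrans_term k i j t n).
Proof.
move=> t0; apply: nondecreasing_is_cvgn; first exact: Ptrans_psum_nondecreasing.
by exists 1 => _ [N _ <-]; exact: Ptrans_psum_le1.
Qed.

Lemma Ptrans_term_le k i j t n : 0 <= t -> Ptrans_term k i j t n <= Ptrans C D k t i j.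
Proof.
move=> t0; rewrite PtransE.
have := nondecreasing_cvgn_le (@Ptrans_psum_nondecreasing k i j t t0)
  (@Ptrans_psum_cvg k i j t t0) n.+1.
apply: le_trans.
by rewrite big_nat_recr //= lerDr sumr_ge0 // => m _; exact: Ptrans_term_ge0.
Qed.

Lemma Ptrans_ge0 k i j t : 0 <= t -> 0 <= Ptrans C D k t i j.
Proof. by move=> t0; rewrite (le_trans _ (@Ptrans_term_le k i j t 0 t0)) ?Ptrans_term_ge0. Qed.

Lemma Ptrans_le1 k i j t : 0 <= t -> Ptrans C D k t i j <= 1.
Proof.
move=> t0; rewrite PtransE; apply: limr_le; first exact: Ptrans_psum_cvg.
by apply: nearW => N; exact: Ptrans_psum_le1.
Qed.

Lemma measurable_Ptrans_term k i j n (A : set R) :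
  measurable_fun A (fun t => Ptrans_term k i j t n).
Proof.
have mtheta : measurable_fun A (fun t : R => theta C * t) by apply: measurable_funM.
apply: measurable_funM => //; apply: measurable_funM => //.
apply: measurable_funM; last exact: measurable_funX.
exact: measurableT_comp (@measurable_expR R) (measurable_funN mtheta).
Qed.

Lemma measurable_Ptrans k i j :
  measurable_fun (`[0%R, +oo[ : set R) (fun t => Ptrans C D k t i j).
Proof.
apply: (measurable_fun_cvg (h := fun N t => \sum_(0 <= n < N) Ptrans_term k i j t n)).
  by move=> N; apply: measurable_sum => n; exact: measurable_Ptrans_term.
move=> t /=; rewrite in_itv /= andbT => t0; rewrite PtransE.
exact: Ptrans_psum_cvg.
Qed.

Definition reachable i j L := exists n, 0 < Kpow C D n L i j.

Lemma reachable_refl i : reachable i i 0.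
Proof. by exists 0%N; rewrite /= !mxE eqxx. Qed.

Lemma reachable_step i a b L m :
  reachable i a L -> 0 < Kstep C D m a b -> reachable i b (L + m).
Proof.
move=> [n Kpos] Kab; exists n.+1; rewrite KpowSE.
have term_ge0 l c : 0 <= Kpow C D n l i c * Kstep C D (L + m - l) c b.
  by rewrite mulr_ge0 ?Kpow_ge0 ?Kstep_ge0.
rewrite (bigD1_seq L) /=; last 2 first.
- by rewrite mem_index_iota ltnS leq_addr.
- by rewrite mem_iota iota_uniq.
apply: ltr_wpDr; first by apply: sumr_ge0 => l _; apply: sumr_ge0 => c _.
rewrite (bigD1 a) //=; apply: ltr_wpDr; first by apply: sumr_ge0 => c _.
by rewrite addnC addnK mulr_gt0.
Qed.

Definition gen_edge := [rel a b : 'I_M | (a != b) && (0 < (C + Dsum D) a b)].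

Lemma gen_edge_Kstep a b : gen_edge a b -> exists m, 0 < Kstep C D m a b.
Proof.
move=> /andP[ab]; rewrite mxE.
have [Cab_gt0|Cab_le0] := ltP 0 (C a b).
  by exists 0%N; rewrite Kstep0E (negbTE ab) add0r mulr_gt0.
move=> Eab_gt0; have Dsum_gt0 : 0 < Dsum D a b.
  by have := C_offdiag_ge0 ab; lra.
have [[m Dm]|D0] := pselect (exists m, D m.+1 a b != 0).
  by exists m.+1; rewrite KstepSE mulr_gt0 // lt_neqAle eq_sym Dm D_ge0.
move: Dsum_gt0; rewrite /Dsum /mxseries mxE.
have -> : (fun N => \sum_(0 <= l < N) (if l is l'.+1 then D l'.+1 else 0) a b) = fun=> 0.
  apply/funext => N; apply: big1 => -[|l] _; first by rewrite mxE.
  by apply/eqP; apply: contra_notT D0 => Dl; exists l.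
by rewrite lim_cst // ltxx.
Qed.

Lemma reachable_connect s i L j : reachable s i L -> connect gen_edge i j ->
  exists2 L', (L <= L')%N & reachable s j L'.
Proof.
move=> reach_i /connectP [p + ->]; elim: p i L reach_i => [|a p IH] i L reach_i /=.
  by exists L.
move=> /andP [ia path_a]; have [m Kia] := gen_edge_Kstep ia.
have [L' LL' reach_last] := IH a _ (reachable_step reach_i Kia) path_a.
by exists L' => //; apply: leq_trans LL'; exact: leq_addr.
Qed.

Lemma reachable_unbounded m i0 j0 :
  irreducible_gen (C + Dsum D) -> 0 < D m.+1 i0 j0 ->
  forall k i j, exists2 L, (k <= L)%N & reachable i j L.
Proof.
move=> irr D_gt0.
have K_gt0 : 0 < Kstep C D m.+1 i0 j0 by rewrite KstepSE mulr_gt0.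
(* one more arrival through (i0, j0), then back to i0 by irreducibility *)
have pump s L : reachable s i0 L -> exists2 L', (L < L')%N & reachable s i0 L'.
  move=> reach_i0; have [L' LL' reach_i0'] :=
    reachable_connect (reachable_step reach_i0 K_gt0) (irr j0 i0).
  by exists L' => //; apply: leq_trans LL'; rewrite addnS ltnS leq_addr.
have loop s k : exists2 L, (k <= L)%N & reachable s i0 L.
  elim: k => [|k [L kL reach_i0]].
    by have [L _ reach_i0] := reachable_connect (reachable_refl s) (irr s i0); exists L.
  by have [L' LL' ?] := pump s L reach_i0; exists L' => //; exact: leq_ltn_trans LL'.
move=> k i j; have [L kL reach_i0] := loop i k.
have [L' LL' ?] := reachable_connect reach_i0 (irr i0 j).
by exists L' => //; exact: leq_trans LL'.
Qed.

Lemma D_entry_gt0 (piv : 'rV[R]_M) (lam : R) :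
  (fun n : nat => \sum_(1 <= k < n)
     (k%:R * \sum_(i < M) \sum_(j < M) piv 0 i * D k i j : R)) @ \oo --> lam ->
  0 < lam -> exists m i0 j0, 0 < D m.+1 i0 j0.
Proof.
move=> lam_lim lam_gt0; apply: contrapT => noD.
have D0 m i j : D m.+1 i j = 0.
  apply/eqP; rewrite eq_le D_ge0 andbT leNgt; apply/negP => Dpos.
  by apply: noD; exists m, i, j.
have seq0 : (fun n : nat => \sum_(1 <= k < n)
    (k%:R * \sum_(i < M) \sum_(j < M) piv 0 i * D k i j : R)) = fun=> 0.
  apply/funext => n; rewrite big_nat_cond big1 // => -[|k] // _.
  by rewrite big1 ?mulr0 // => i _; rewrite big1 // => j _; rewrite D0 mulr0.
have := cvg_lim (@Rhausdorff R) lam_lim; rewrite seq0 lim_cst // => lam0.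
by rewrite -lam0 ltxx in lam_gt0.
Qed.

Variable H : probability R R.

Lemma Amx_ge0 k i j : 0 <= Amx C D H k i j.
Proof.
rewrite mxE fine_ge0 // integral_ge0 // => t.
by rewrite /= in_itv /= andbT => t0; rewrite lee_fin Ptrans_ge0.
Qed.

Lemma Amx_gt0 k i j n : H `]0%R, +oo[%classic != 0%E ->
  0 < Kpow C D n k i j -> 0 < Amx C D H k i j.
Proof.
move=> H_pos Kpos; rewrite mxE fine_gt0 //; apply/andP; split.
  apply: (@lt_le_trans _ _ (\int[H]_(t in `[0%R, +oo[) (Ptrans_term k i j t n)%:E)%E).
    apply: (@integral_halfline_gt0 R H (fun t => Ptrans_term k i j t n)) => //.
    - exact: measurable_Ptrans_term.
    - by move=> t; exact: Ptrans_term_ge0.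
    by move=> t t0; exact: Ptrans_term_gt0.
  apply: ge0_le_integral => //.
  - by move=> t; rewrite /= in_itv /= andbT => t0; rewrite lee_fin Ptrans_term_ge0.
  - by apply/measurable_EFinP; exact: measurable_Ptrans_term.
  - by apply/measurable_EFinP; exact: measurable_Ptrans.
  by move=> t; rewrite /= in_itv /= andbT => t0; rewrite lee_fin Ptrans_term_le.
apply: (@le_lt_trans _ _ (\int[H]_(t in `[0%R, +oo[) (cst 1%E) t)%E); last first.
  by rewrite integral_cst // mul1e (le_lt_trans (probability_le1 _ _)) ?ltry.
apply: ge0_le_integral => //.
- by move=> t; rewrite /= in_itv /= andbT => t0; rewrite lee_fin Ptrans_ge0.
- by apply/measurable_EFinP; exact: measurable_Ptrans.
by move=> t; rewrite /= in_itv /= andbT => t0; rewrite lee_fin Ptrans_le1.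
Qed.

Lemma Abreve_ge_Amx mu l i j : 0 < mu ->
  mu / (mu + theta C) * Amx C D H l i j <= Abreve C D H mu (l%:Z - 1) i j.
Proof.
move=> mu_gt0; case: l => [|[|n]].
- by rewrite /Abreve !mxE.
- rewrite /Abreve /= !mxE lerDr mulr_ge0 ?ler0n // divr_ge0 ?ltW ?theta_gt0 //.
  by rewrite addr_gt0 ?theta_gt0.
- have -> : n.+2%:Z - 1 = n.+1 by rewrite -addn1 PoszD addrK.
  by rewrite /Abreve !mxE.
Qed.

End Uniformization.
Theorem lemma8 (R : realType) (M : nat) (C : 'M[R]_M) (D : nat -> 'M[R]_M)
    (piv : 'rV[R]_M) (lam : R) (H : probability R R) (h mu : R) :
  (0 < M)%N ->
  (forall i : 'I_M, C i i < 0) ->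
  (forall i j : 'I_M, i != j -> 0 <= C i j) ->
  (forall (k : nat) (i j : 'I_M), 0 <= D k.+1 i j) ->
  (* (C + sum_{k>=1} D(k)) e = 0, the series of row sums converging *)
  (forall i : 'I_M,
     (fun n : nat => \sum_(1 <= k < n) \sum_(j < M) D k i j) @ \oo --> - \sum_(j < M) C i j) ->
  irreducible_gen (C + Dsum D) ->
  (* piv is the stationary (probability) vector of C + D *)
  (forall j : 'I_M, 0 <= piv 0 j) ->
  \sum_(j < M) piv 0 j = 1 ->
  piv *m (C + Dsum D) = 0 ->
  (* lam = piv (sum_k k D(k)) e > 0 *)
  (fun n : nat => \sum_(1 <= k < n) (k%:R * \sum_(i < M) \sum_(j < M) piv 0 i * D k i j : R)) @ \oo --> lam ->
  0 < lam ->
  (* H is a distribution on [0, oo) with mean h in (0, oo) *)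
  H `]-oo, 0%R[%classic = 0%E ->
  (\int[H]_x (x%:E) = h%:E)%E ->
  0 < h ->
  lam * h < 1 ->
  0 < mu ->
  (forall i : 'I_M, 0 < Amx C D H 0 i i) /\
  (forall i : 'I_M, 0 < Abreve C D H mu (-1) i i) /\
  (forall (k : nat) (i j : 'I_M),
     (0 < \sum_(k <= l <oo) (Amx C D H l i j)%:E)%E /\
     (0 < \sum_(k <= l <oo) (Abreve C D H mu (l%:Z - 1) i j)%:E)%E).
Proof.
move=> M_gt0 C_diag C_off D_ge0 rowsum irr _ _ _ lam_lim lam_gt0 _ H_mean h_gt0 _ mu_gt0.
have H_pos := measure_pos_halfline_neq0 H_mean h_gt0.
have A_ge0 := Amx_ge0 M_gt0 C_diag C_off D_ge0 rowsum H.
have A_gt0 := Amx_gt0 M_gt0 C_diag C_off D_ge0 rowsum H_pos.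
have Abreve_ge l i j := Abreve_ge_Amx D M_gt0 C_diag H l i j mu_gt0.
have c_gt0 : 0 < mu / (mu + theta C).
  by rewrite divr_gt0 // addr_gt0 // (theta_gt0 M_gt0 C_diag).
have A0_gt0 i : 0 < Amx C D H 0 i i.
  by have [n Kpos] := reachable_refl C D i; exact: A_gt0 Kpos.
split=> //; split=> [i|k i j].
  exact: lt_le_trans (mulr_gt0 c_gt0 (A0_gt0 i)) (Abreve_ge 0%N i i).
have [m [i0 [j0 D_gt0]]] := D_entry_gt0 D_ge0 lam_lim lam_gt0.
have [L kL [n /A_gt0 AL_gt0]] :=
  reachable_unbounded M_gt0 C_diag C_off D_ge0 irr D_gt0 k i j.
split; apply: (nneseries_gt0 kL) => //.
- by move=> l; exact: le_trans (mulr_ge0 (ltW c_gt0) (A_ge0 l i j)) (Abreve_ge l i j).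
- exact: lt_le_trans (mulr_gt0 c_gt0 AL_gt0) (Abreve_ge L i j).
Qed.
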